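(* Let $A$ and $B$ be commutative rings with identity and let $\phi: A\to B$ be a surjective ring homomorphism whose kernel is the principal ideal $\ker(\phi)=\langle \pi\rangle$ for some $\pi\in A$. If $I$ is an ideal of $A$ such that $\phi(I)$ is generated by $n$ elements, then there exist $a_1,a_2,\dots,a_n\in I$ such that $$I=\langle a_1,a_2,\dots,a_n\rangle+\pi(I:\pi).$$ In particular, if $B$ is Noetherian, then for every ideal $I$ of $A$ there exist a positive integer $n$ and elements $a_1,\dots,a_n\in I$ such that $I=\langle a_1,\dots,a_n\rangle+\pi(I:\pi)$.
   Context: For ideals $I,J$ of a commutative ring $R$, the ideal quotient is $(I:J)=\{x\in R: xJ\subseteq I\}$, and $(I:a)$ denotes $(I:\langle a\rangle)$. For an ideal $K$ and $\pi\in A$, $\pi K=\{\pi k: k\in K\}$. *)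

From mathcomp Require Import all_boot all_order all_algebra.
Set Implicit Arguments. Unset Strict Implicit. Unset Printing Implicit Defensive.
Import GRing.Theory.
Local Open Scope ring_scope.

Definition is_ideal (R : comPzRingType) (I : R -> Prop) : Prop :=
  [/\ I 0, (forall x y, I x -> I y -> I (x + y)) & (forall r x, I x -> I (r * x))].

Definition gen_ideal (R : comPzRingType) (n : nat) (a : 'I_n -> R) : R -> Prop :=
  fun x => exists c : 'I_n -> R, x = \sum_(i < n) c i * a i.

Definition ideal_add (R : comPzRingType) (J K : R -> Prop) : R -> Prop :=
  fun x => exists y z, [/\ J y, K z & x = y + z].

Definition ideal_colon (R : comPzRingType) (I : R -> Prop) (a : R) : R -> Prop :=
  fun x => I (x * a).

Definition ideal_scale (R : comPzRingType) (p : R) (K : R -> Prop) : R -> Prop :=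
  fun y => exists k, K k /\ y = p * k.

Definition img (A B : Type) (f : A -> B) (I : A -> Prop) : B -> Prop :=
  fun b => exists a, I a /\ b = f a.

Definition same_ideal (R : Type) (I J : R -> Prop) : Prop := forall x, I x <-> J x.

Definition noetherian (R : comPzRingType) : Prop :=
  forall J : R -> Prop, is_ideal J ->
    exists n (b : 'I_n -> R), same_ideal J (gen_ideal b).

(* If phi(I) = <phi a_1, ..., phi a_n> with a_i in I, then for x in I some
   combination y of the a_i has phi(x - y) = 0, so x - y = k pi; as x - y lies
   in I, k lies in (I : pi).  A Noetherian
   B gives finitely many generators of phi(I), padded with 0 to make n > 0. *)

From mathcomp Require Import all_boot all_order all_algebra.
Local Open Scope ring_scope.
Import GRing.Theory.
Set Implicit Arguments. Unset Strict Implicit.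

Section Ideals.

Variable R : comPzRingType.

Lemma gen_ideal_gen n (a : 'I_n -> R) i : gen_ideal a (a i).
Proof.
exists (fun j => (j == i)%:R).
rewrite (bigD1 i) //= eqxx mul1r big1 ?addr0 // => j /negbTE ->.
by rewrite mul0r.
Qed.

Lemma gen_ideal_sub (I : R -> Prop) n (a : 'I_n -> R) :
  is_ideal I -> (forall i, I (a i)) -> forall x, gen_ideal a x -> I x.
Proof.
case=> I0 ID IM Ia _ [c ->].
by apply: (big_ind I I0 ID) => i _; apply: IM.
Qed.

Lemma ideal_scale_colon_sub (I : R -> Prop) p x :
  ideal_scale p (ideal_colon I p) x -> I x.
Proof. by move=> [k [Ikp ->]]; rewrite mulrC. Qed.

Definition cons0 n (a : 'I_n -> R) : 'I_n.+1 -> R :=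
  fun i => if unlift ord0 i is Some j then a j else 0.

Lemma cons0_in_ideal (I : R -> Prop) n (a : 'I_n -> R) :
  is_ideal I -> (forall i, I (a i)) -> forall i, I (cons0 a i).
Proof. by case=> I0 _ _ Ia i; rewrite /cons0; case: unlift. Qed.

Lemma gen_ideal_cons0 n (a : 'I_n -> R) : same_ideal (gen_ideal a) (gen_ideal (cons0 a)).
Proof.
move=> x; split=> -[c ->].
- exists (cons0 c); rewrite big_ord_recl /cons0 unlift_none mul0r add0r.
  by apply: eq_bigr => j _; rewrite liftK.
- exists (fun j => c (lift ord0 j)).
  rewrite big_ord_recl /cons0 unlift_none mulr0 add0r.
  by apply: eq_bigr => j _; rewrite liftK.
Qed.

End Ideals.

Section SurjectiveImage.

Variables (A B : comPzRingType) (phi : {rmorphism A -> B}).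
Hypothesis phi_surj : forall b : B, exists a : A, phi a = b.

Lemma img_is_ideal (I : A -> Prop) : is_ideal I -> is_ideal (img phi I).
Proof.
case=> I0 ID IM; split.
- by exists 0; rewrite rmorph0.
- move=> _ _ [u [Iu ->]] [v [Iv ->]].
  by exists (u + v); rewrite rmorphD; split=> //; apply: ID.
- move=> r _ [u [Iu ->]]; have [r' <-] := phi_surj r.
  by exists (r' * u); rewrite rmorphM; split=> //; apply: IM.
Qed.

Lemma img_gen_lift (I : A -> Prop) n (b : 'I_n -> B) :
  same_ideal (img phi I) (gen_ideal b) ->
  exists a : 'I_n -> A, (forall i, I (a i)) /\ (forall i, phi (a i) = b i).
Proof.
move=> Ib.
have /fin_all_exists [a ha] : forall i, exists a, I a /\ phi a = b i.
  by move=> i; have [a [Ia ->]] := proj2 (Ib (b i)) (gen_ideal_gen b i); exists a.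
by exists a; split=> i; case: (ha i).
Qed.

Lemma gen_ideal_lift n (a : 'I_n -> A) x :
  gen_ideal (fun i => phi (a i)) (phi x) ->
  exists2 y, gen_ideal a y & phi (x - y) = 0.
Proof.
move=> [c hc]; have /fin_all_exists [c' hc'] := fun i => phi_surj (c i).
exists (\sum_(i < n) c' i * a i); first by exists c'.
apply/eqP; rewrite rmorphB rmorph_sum hc subr_eq0 /=; apply/eqP/eq_bigr => i _.
by rewrite rmorphM hc'.
Qed.

End SurjectiveImage.

Section PrincipalKernel.

Variables (A B : comPzRingType) (phi : {rmorphism A -> B}) (p : A).
Hypothesis phi_surj : forall b : B, exists a : A, phi a = b.
Hypothesis ker_phi :
  same_ideal (fun x => phi x = 0) (fun x => exists c : A, x = c * p).

Lemma ideal_eq_gen_add_scale_colon (I : A -> Prop) n (a : 'I_n -> A) :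
  is_ideal I -> (forall i, I (a i)) ->
  (forall x, I x -> gen_ideal (fun i => phi (a i)) (phi x)) ->
  same_ideal I (ideal_add (gen_ideal a) (ideal_scale p (ideal_colon I p))).
Proof.
move=> hI Ia img_gen x; split=> [Ix | [y [z [Gy Kz ->]]]]; last first.
  have [_ ID _] := hI.
  by apply: ID; [apply: gen_ideal_sub hI Ia _ Gy | apply: ideal_scale_colon_sub Kz].
have [y Gy /ker_phi [k xyk]] := gen_ideal_lift phi_surj (img_gen x Ix).
have Ixy : I (x - y).
  have [_ ID IM] := hI.
  by rewrite -mulN1r; apply: ID => //; apply: IM; apply: gen_ideal_sub hI Ia _ Gy.
exists y, (p * k); split=> //; last by rewrite mulrC -xyk addrC subrK.
by exists k; split=> //; rewrite /ideal_colon -xyk.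
Qed.

Lemma ideal_decomposition (I : A -> Prop) n (b : 'I_n -> B) :
  is_ideal I -> same_ideal (img phi I) (gen_ideal b) ->
  exists a : 'I_n -> A, (forall i, I (a i)) /\
    same_ideal I (ideal_add (gen_ideal a) (ideal_scale p (ideal_colon I p))).
Proof.
move=> hI Ib; have [a [Ia phi_a]] := img_gen_lift Ib.
exists a; split=> //; apply: ideal_eq_gen_add_scale_colon => // x Ix.
have [c hc] := proj1 (Ib (phi x)) (ex_intro _ x (conj Ix erefl)).
by exists c; rewrite hc; apply: eq_bigr => i _; rewrite phi_a.
Qed.

End PrincipalKernel.

Lemma same_ideal_add_gen_cons0 (R : comPzRingType) n (a : 'I_n -> R) K I :
  same_ideal I (ideal_add (gen_ideal a) K) ->
  same_ideal I (ideal_add (gen_ideal (cons0 a)) K).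
Proof.
move=> hI x; split=> [/hI | ] [y [z [Gy Kz ->]]].
  by exists y, z; split=> //; apply/(gen_ideal_cons0 a y).
by apply/hI; exists y, z; split=> //; apply/(gen_ideal_cons0 a y).
Qed.

Theorem proposition2p1 (A B : comPzRingType) (phi : {rmorphism A -> B}) (p : A) :
  (forall b : B, exists a : A, phi a = b) ->
  same_ideal (fun x => phi x = 0) (fun x => exists c : A, x = c * p) ->
  (forall (I : A -> Prop) (n : nat), is_ideal I ->
     (exists b : 'I_n -> B, same_ideal (img phi I) (gen_ideal b)) ->
     exists a : 'I_n -> A, (forall i, I (a i)) /\
       same_ideal I (ideal_add (gen_ideal a) (ideal_scale p (ideal_colon I p))))
  /\
  (noetherian B ->
   forall I : A -> Prop, is_ideal I ->
     exists n : nat, (0 < n)%N /\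
       exists a : 'I_n -> A, (forall i, I (a i)) /\
         same_ideal I (ideal_add (gen_ideal a) (ideal_scale p (ideal_colon I p)))).
Proof.
move=> surj ker; split=> [I n hI [b Ib] | noeth I hI].
  exact: ideal_decomposition surj ker I n b hI Ib.
have [n [b Ib]] := noeth _ (img_is_ideal surj hI).
have [a [Ia hIa]] := ideal_decomposition surj ker hI Ib.
exists n.+1; split=> //; exists (cons0 a); split.
  exact: cons0_in_ideal.
exact: same_ideal_add_gen_cons0.
Qed.
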